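(* Let $n\ge1$, $p\in(0,1/2]$, $q=1-p$, and let $X_1,\dots,X_n$ be i.i.d. with $P(X_i=1)=P(X_i=-1)=p$, $P(X_i=0)=1-2p$. For $k\in\{1,\dots,n\}$ let $V_k=q^{n-k}$ and $W_k=2\bigl((1-p)^{n-k}-(1-2p)^{n-k}\bigr)$. Let $s$ be the smallest $k\in\{1,\dots,n\}$ with $W_k/V_k<1$. Then the stopping time ''stop at the first $m\ge s$ with $X_m\in\{-1,1\}$, and at $m=n$ if there is none'' maximizes, over all stopping times $\tau\in\{1,\dots,n\}$ with respect to the natural filtration, the probability that either $X_\tau=1$ and $X_i\ne1$ for all $i>\tau$, or $X_\tau=-1$ and $X_i\ne-1$ for all $i>\tau$. *)

From HB Require Import structures.
From mathcomp Require Import all_boot all_order all_algebra.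
Set Implicit Arguments. Unset Strict Implicit. Unset Printing Implicit Defensive.
Import Order.TTheory GRing.Theory Num.Theory.
Local Open Scope ring_scope.

(* Outcomes: omega : {ffun 'I_n -> 'I_3}; coordinate i (0-based, i.e. the
   paper's index i+1) encodes the value X_{i+1} = omega i - 1 in {-1,0,1}. *)
Definition outcome (n : nat) := {ffun 'I_n -> 'I_3}.

Definition X (n : nat) (w : outcome n) (i : 'I_n) : int := (nat_of_ord (w i))%:Z - 1.

Definition wt (R : nzRingType) (p : R) (v : int) : R :=
  if v == 0 then 1 - p *+ 2 else p.

Definition Pr_out (R : nzRingType) (n : nat) (p : R) (w : outcome n) : R :=
  \prod_(i < n) wt p (X w i).

Definition Pr (R : nzRingType) (n : nat) (p : R) (E : pred (outcome n)) : R :=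
  \sum_(w : outcome n | E w) Pr_out p w.

(* tau is a stopping time w.r.t. the natural filtration: the event
   {tau = k} depends only on coordinates 0..k. *)
Definition stopping_time (n : nat) (tau : outcome n -> 'I_n) : Prop :=
  forall w w' : outcome n,
    (forall j : 'I_n, (j <= tau w)%N -> w j = w' j) -> tau w' = tau w.

Definition win (n : nat) (tau : outcome n -> 'I_n) (w : outcome n) : bool :=
  ((X w (tau w) == 1) && [forall i : 'I_n, (tau w < i)%N ==> (X w i != 1)])
  || ((X w (tau w) == -1) && [forall i : 'I_n, (tau w < i)%N ==> (X w i != -1)]).

Lemma last_ord_proof (n : nat) (s : 'I_n) : (n.-1 < n)%N.
Proof. by rewrite ltn_predL; apply: leq_ltn_trans (leq0n s) (ltn_ord s). Qed.

Definition last_ord (n : nat) (s : 'I_n) : 'I_n := Ordinal (last_ord_proof s).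

Definition thr_rule (n : nat) (s : 'I_n) (w : outcome n) : 'I_n :=
  head (last_ord s) [seq i : 'I_n <- enum 'I_n | (s <= i)%N && (X w i != 0)].

Definition Vk (R : nzRingType) (n : nat) (p : R) (i : 'I_n) : R :=
  (1 - p) ^+ (n - i.+1).
Definition Wk (R : nzRingType) (n : nat) (p : R) (i : 'I_n) : R :=
  ((1 - p) ^+ (n - i.+1) - (1 - p *+ 2) ^+ (n - i.+1)) *+ 2.

From HB Require Import structures.
From mathcomp Require Import all_boot all_order all_algebra.
From mathcomp Require Import ring lra zify.
Import Order.TTheory GRing.Theory Num.Theory.
Set Implicit Arguments. Unset Strict Implicit. Unset Printing Implicit Defensive.
Local Open Scope ring_scope.

(* The optimal stopping problem is solved by backward induction on the number
   of coordinates.  Conditioning on the first coordinate x, a stopping time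
   either stops at index 0 for every continuation -- then it wins iff x is
   nonzero and never repeated, which has probability (1-p)^(n-1) -- or never
   does, and then it is a stopping time for the remaining coordinates.  Hence
   every stopping time wins with probability at most the Bellman value
     vopt 0 = 0,   vopt (m+1) = sum_x P(x) max(stop value of x, vopt m),
   i.e. vopt (m+1) = 2p max((1-p)^m, vopt m) + (1-2p) vopt m.  The same
   conditioning shows that the threshold rule with N coordinates to go wins
   with probability Wn N = 2((1-p)^N - (1-2p)^N), which satisfies
   Wn (N+1) = 2p (1-p)^N + (1-2p) Wn N.  Finally (1-p)^N <= Wn N persists as N
   grows, so vopt agrees with Wn while Wn < (1-p)^N and freezes afterwards;
   with the minimality of s this yields vopt n = Wn (n - s), the success
   probability of the threshold rule. *)

Definition fcons (n : nat) (x : 'I_3) (w : outcome n) : outcome n.+1 :=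
  [ffun i => if unlift ord0 i is Some j then w j else x].

Lemma fcons0 n x (w : outcome n) : fcons x w ord0 = x.
Proof. by rewrite ffunE unlift_none. Qed.

Lemma fconsS n x (w : outcome n) j : fcons x w (lift ord0 j) = w j.
Proof. by rewrite ffunE liftK. Qed.

Lemma sum_fcons (R : nzRingType) n (F : outcome n.+1 -> R) :
  \sum_(w : outcome n.+1) F w = \sum_(x : 'I_3) \sum_(w : outcome n) F (fcons x w).
Proof.
rewrite pair_big /= (reindex (fun q : 'I_3 * outcome n => fcons q.1 q.2)) //=.
exists (fun w : outcome n.+1 => (w ord0, [ffun j => w (lift ord0 j)])).
  move=> [x w] _ /=; rewrite fcons0; congr pair.
  by apply/ffunP => j; rewrite ffunE fconsS.
move=> w _; apply/ffunP => i; rewrite ffunE.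
by case: unliftP => [j ->|->]; rewrite ?ffunE.
Qed.

Notation wt3 p x := (wt p ((nat_of_ord x)%:Z - 1)).

Lemma Pr_out_fcons (R : nzRingType) n (p : R) x (w : outcome n) :
  Pr_out p (fcons x w) = wt3 p x * Pr_out p w.
Proof.
rewrite /Pr_out big_ord_recl /X fcons0; congr (_ * _).
by apply: eq_bigr => j _; rewrite fconsS.
Qed.

Lemma sum_I3 (R : nzRingType) (f : 'I_3 -> R) :
  \sum_(x : 'I_3) f x = f (inord 0) + f (inord 1) + f (inord 2).
Proof.
rewrite !big_ord_recl big_ord0 addr0 addrA.
by congr (f _ + f _ + f _); apply: val_inj; rewrite /= ?inordK.
Qed.

Lemma sum_wt3 (R : comNzRingType) (p : R) : \sum_(x : 'I_3) wt3 p x = 1.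
Proof. by rewrite sum_I3 !inordK // /wt /= mulr2n; ring. Qed.

Lemma PrE (R : nzRingType) n (p : R) (E : pred (outcome n)) :
  Pr p E = \sum_(w : outcome n) (E w)%:R * Pr_out p w.
Proof.
rewrite /Pr big_mkcond; apply: eq_bigr => w _.
by case: (E w); rewrite ?mul1r ?mul0r.
Qed.

Lemma Pr_fcons (R : comNzRingType) n (p : R) (E : pred (outcome n.+1)) :
  Pr p E = \sum_(x : 'I_3) wt3 p x *
             \sum_(w : outcome n) (E (fcons x w))%:R * Pr_out p w.
Proof.
rewrite PrE sum_fcons; apply: eq_bigr => x _; rewrite mulr_sumr.
by apply: eq_bigr => w _; rewrite Pr_out_fcons mulrCA.
Qed.

Lemma X_eq1 (a : 'I_3) : ((nat_of_ord a)%:Z - 1 == 1) = (nat_of_ord a == 2%N).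
Proof. by case: a => [[|[|[|k]]] hk]. Qed.

Lemma X_eqN1 (a : 'I_3) : ((nat_of_ord a)%:Z - 1 == -1) = (nat_of_ord a == 0%N).
Proof. by case: a => [[|[|[|k]]] hk]. Qed.

Lemma X_neq0 (a : 'I_3) : ((nat_of_ord a)%:Z - 1 != 0) = (nat_of_ord a != 1%N).
Proof. by case: a => [[|[|[|k]]] hk]. Qed.

Lemma winE n (tau : outcome n -> 'I_n) w :
  win tau w = (nat_of_ord (w (tau w)) != 1%N) &&
              [forall i : 'I_n, (tau w < i)%N ==> (w i != w (tau w))].
Proof.
rewrite /win /X !X_eq1 !X_eqN1.
under eq_forallb => i do rewrite X_eq1.
under [in X in _ || X]eq_forallb => i do rewrite X_eqN1.
under [in X in _ = X]eq_forallb => i do rewrite -val_eqE.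
by case: (w (tau w)) => [[|[|[|k]]] hk] //=; rewrite orbF.
Qed.

Lemma forall_after_lift n (P : 'I_n.+1 -> bool) (m : nat) :
  [forall i : 'I_n.+1, (m < i)%N ==> P i] =
  [forall j : 'I_n, (m < j.+1)%N ==> P (lift ord0 j)].
Proof.
apply/forallP/forallP => H i; first by have := H (lift ord0 i); rewrite lift0.
case: (unliftP ord0 i) => [j ->|->]; first by have := H j; rewrite lift0.
by apply/implyP; rewrite ltn0.
Qed.

Lemma prod_indicator (R : comNzRingType) (I : finType) (b : I -> bool) :
  ([forall j, b j])%:R = \prod_(j : I) (b j)%:R :> R.
Proof.
case: (boolP [forall j, b j]) => [/forallP H|]; first by rewrite big1 // => j _; rewrite H.
by rewrite negb_forall => /existsP [j Hj]; rewrite (bigD1 j) //= (negbTE Hj) mul0r.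
Qed.

(* For a nonzero value c, no coordinate equals c with probability (1-p)^n:
   the coordinates are independent and each avoids c with probability 1-p. *)
Lemma Pr_avoid (R : comNzRingType) n (p : R) (c : 'I_3) :
  nat_of_ord c != 1%N -> Pr p [pred w : outcome n | [forall j, w j != c]] = (1 - p) ^+ n.
Proof.
move=> c_nz; rewrite PrE.
under eq_bigr => w _ do rewrite /= prod_indicator -big_split /=.
rewrite -(bigA_distr_bigA (fun (_ : 'I_n) (y : 'I_3) => (y != c)%:R * wt3 p y)) /=.
rewrite (eq_bigr (fun _ => 1 - p)) ?prodr_const ?card_ord // => j _.
rewrite sum_I3 /wt !inordK //.
by case: c c_nz => [[|[|[|k]]] hk] //= _; rewrite -!val_eqE /= !inordK //= mulr2n; ring.
Qed.

Lemma cond_win_stop (R : comNzRingType) n (p : R) (tau : outcome n.+1 -> 'I_n.+1) x :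
  (forall w, tau (fcons x w) = ord0) ->
  \sum_(w : outcome n) (win tau (fcons x w))%:R * Pr_out p w
    = (nat_of_ord x != 1%N)%:R * (1 - p) ^+ n.
Proof.
move=> stop0.
under eq_bigr => w _ do rewrite winE stop0 fcons0 forall_after_lift.
under eq_bigr => w _ do under eq_forallb => j do rewrite fconsS /=.
case: (boolP (nat_of_ord x != 1%N)) => x_nz /=.
  by rewrite mul1r -(Pr_avoid n p x_nz) PrE.
by rewrite mul0r big1 // => w _; rewrite mul0r.
Qed.

(* A stopping time that does not stop at 0 after first coordinate x, seen as
   a rule on the remaining coordinates. *)
Definition tshift n (tau : outcome n.+2 -> 'I_n.+2) (x : 'I_3) (w : outcome n.+1)
  : 'I_n.+1 := odflt ord0 (unlift ord0 (tau (fcons x w))).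

Lemma tshiftE n (tau : outcome n.+2 -> 'I_n.+2) x w :
  tau (fcons x w) != ord0 -> tau (fcons x w) = lift ord0 (tshift tau x w).
Proof. by rewrite eq_sym => /unlift_some [j e1 e2]; rewrite /tshift e2. Qed.

Lemma win_tshift n (tau : outcome n.+2 -> 'I_n.+2) x w :
  tau (fcons x w) != ord0 -> win tau (fcons x w) = win (tshift tau x) w.
Proof.
move=> /tshiftE e; rewrite !winE e fconsS forall_after_lift lift0.
by congr (_ && _); apply: eq_forallb => j; rewrite fconsS ltnS.
Qed.

Lemma stop0_fcons n (tau : outcome n.+1 -> 'I_n.+1) x w1 w2 :
  stopping_time tau -> tau (fcons x w1) = ord0 -> tau (fcons x w2) = ord0.
Proof.
move=> st e; rewrite -e; apply: st => j; rewrite e leqn0 => /eqP j0.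
have -> : j = ord0 by apply: val_inj.
by rewrite !fcons0.
Qed.

Lemma tshift_stopping n (tau : outcome n.+2 -> 'I_n.+2) x :
  stopping_time tau -> stopping_time (tshift tau x).
Proof.
move=> st w1 w2 H; rewrite /tshift.
suff -> : tau (fcons x w2) = tau (fcons x w1) by [].
case: (eqVneq (tau (fcons x w1)) ord0) => [e|ne]; first by rewrite e (stop0_fcons _ st e).
apply: st => i; rewrite (tshiftE ne) lift0.
case: (unliftP ord0 i) => [j ->|->]; last by rewrite !fcons0.
by rewrite lift0 ltnS => hj; rewrite !fconsS H.
Qed.

(* Wn p N: success probability of "stop at the first nonzero value" with N
   coordinates to go (the paper's W_k for N = n - k). *)
Definition Wn (R : nzRingType) (p : R) (N : nat) : R :=
  ((1 - p) ^+ N - (1 - p *+ 2) ^+ N) *+ 2.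

(* First-step recursion: stop on a nonzero first value, else go on. *)
Lemma WnS (R : comNzRingType) (p : R) N :
  Wn p N.+1 = p *+ 2 * (1 - p) ^+ N + (1 - p *+ 2) * Wn p N.
Proof.
rewrite /Wn !exprS.
set A := (1 - p) ^+ N; set B := (1 - p *+ 2) ^+ N.
by clearbody A B; rewrite !mulr2n; ring.
Qed.

Lemma thr_rule_fcons k (s : 'I_k.+2) x (w : outcome k.+1) :
  thr_rule s (fcons x w) =
  if (nat_of_ord s == 0%N) && (nat_of_ord x != 1%N) then ord0
  else lift ord0 (thr_rule (inord s.-1 : 'I_k.+1) w).
Proof.
rewrite /thr_rule enum_ordSl /= {1}/X fcons0 X_neq0 leqn0.
case: ifP => // _; rewrite filter_map.
set l := filter _ _; set l' := filter _ _.
have -> : l = l'.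
  apply: eq_filter => j /=; rewrite /X fconsS inordK; last by have := ltn_ord s; lia.
  by rewrite /bump add1n; case: (nat_of_ord s).
by case: l' => [|a l''] //=; apply: val_inj.
Qed.

Lemma cond_win_thr (R : comNzRingType) (p : R) k (s : 'I_k.+2) x :
  \sum_(w : outcome k.+1) (win (thr_rule s) (fcons x w))%:R * Pr_out p w =
  if (nat_of_ord s == 0%N) && (nat_of_ord x != 1%N) then (1 - p) ^+ k.+1
  else Pr p (win (thr_rule (inord s.-1 : 'I_k.+1))).
Proof.
case: ifP => c.
  rewrite cond_win_stop; first by case/andP: c => _ ->; rewrite mul1r.
  by move=> w; rewrite thr_rule_fcons c.
rewrite PrE; apply: eq_bigr => w _.
have ne : thr_rule s (fcons x w) != ord0 by rewrite thr_rule_fcons c eq_sym neq_lift.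
have e : tshift (thr_rule s) x w = thr_rule (inord s.-1) w.
  by rewrite /tshift thr_rule_fcons c liftK.
by rewrite win_tshift // /win e.
Qed.

Lemma Pr_win_thr (R : comNzRingType) (p : R) m (s : 'I_m.+1) :
  Pr p (win (thr_rule s)) = Wn p (m.+1 - s).
Proof.
elim: m s => [|k IH] s.
  rewrite ord1 Pr_fcons subn0.
  rewrite (eq_bigr (fun x => wt3 p x * ((nat_of_ord x != 1%N)%:R * (1 - p) ^+ 0))).
    by rewrite sum_I3 !inordK // /wt /Wn /= !expr0 !expr1 !mulr2n; ring.
  by move=> x _; rewrite cond_win_stop // => w; apply: ord1.
rewrite Pr_fcons; under eq_bigr => x _ do rewrite cond_win_thr.
rewrite sum_I3 !inordK //=; case: eqP => s0.
  by rewrite /= IH s0 /= inordK // !subn0 [in RHS]WnS /wt /= !mulr2n; ring.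
rewrite /= IH inordK; last by have := ltn_ord s; lia.
have -> : (k.+1 - s.-1 = k.+2 - s)%N by have := ltn_ord s; lia.
by rewrite -!mulrDl; have := sum_wt3 p; rewrite sum_I3 !inordK // => ->; rewrite mul1r.
Qed.

Section Optimality.
Variables (R : realFieldType) (p : R).
Hypotheses (p_gt0 : 0 < p) (p_le_half : p <= 2^-1).

Lemma one_sub_p_gt0 : 0 < 1 - p.
Proof. by move: p_gt0 p_le_half => hp0 hp1; lra. Qed.

Lemma one_sub_2p_ge0 : 0 <= 1 - p *+ 2.
Proof. by move: p_le_half => hp1; rewrite mulr2n; lra. Qed.

Lemma wt_ge0 v : 0 <= wt p v.
Proof. by rewrite /wt; case: ifP => _; [exact: one_sub_2p_ge0 | exact: ltW]. Qed.

(* The Bellman value of the problem with m coordinates: at each step choose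
   the better of stopping now and continuing optimally. *)
Fixpoint vopt (m : nat) : R :=
  if m is m'.+1 then
    \sum_(x : 'I_3) wt3 p x * Num.max ((nat_of_ord x != 1%N)%:R * (1 - p) ^+ m') (vopt m')
  else 0.

Lemma Pr_win_le_vopt m (tau : outcome m.+1 -> 'I_m.+1) :
  stopping_time tau -> Pr p (win tau) <= vopt m.+1.
Proof.
elim: m tau => [|m IH] tau st; rewrite Pr_fcons /=; apply: ler_sum => x _;
  apply: ler_wpM2l; rewrite ?wt_ge0 //.
  rewrite cond_win_stop; first by rewrite le_max lexx.
  by move=> w; apply: ord1.
case: (pickP (fun w => tau (fcons x w) == ord0)) => [w1 /eqP stop0 | nstop0].
  rewrite cond_win_stop; first by rewrite le_max lexx.
  by move=> w; apply: (stop0_fcons w st stop0).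
have go w : tau (fcons x w) != ord0 by rewrite nstop0.
rewrite (eq_bigr (fun w => (win (tshift tau x) w)%:R * Pr_out p w)); last first.
  by move=> w _; rewrite win_tshift.
by rewrite -PrE le_max IH ?orbT //; apply: tshift_stopping.
Qed.

(* Continuing is always at least as good as stopping on a zero value. *)
Lemma vopt_ge0 m : 0 <= vopt m.
Proof.
elim: m => [|m IH] //=; apply: sumr_ge0 => x _.
by rewrite mulr_ge0 ?wt_ge0 // le_max IH orbT.
Qed.

Lemma voptS m :
  vopt m.+1 = p *+ 2 * Num.max ((1 - p) ^+ m) (vopt m) + (1 - p *+ 2) * vopt m.
Proof.
rewrite /= sum_I3 !inordK // /wt /= mul0r (max_r (vopt_ge0 m)) !mul1r mulr2n.
ring.
Qed.

Lemma stop_ge_Wn_step N : (1 - p) ^+ N <= Wn p N -> (1 - p) ^+ N.+1 <= Wn p N.+1.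
Proof.
move=> h; rewrite WnS exprS.
have hA : 0 <= (1 - p) ^+ N by rewrite exprn_ge0 // ltW // one_sub_p_gt0.
move: h hA; set A := (1 - p) ^+ N; set W := Wn p N => h hA.
have h1 : 0 <= (1 - p *+ 2) * (W - A).
  by apply: mulr_ge0; [exact: one_sub_2p_ge0 | rewrite subr_ge0].
have h2 : 0 <= p * A by rewrite mulr_ge0 // ltW.
by clearbody A W; rewrite mulr2n in h1 *; nra.
Qed.

Lemma stop_ge_Wn_mono N K :
  (N <= K)%N -> (1 - p) ^+ N <= Wn p N -> (1 - p) ^+ K <= Wn p K.
Proof.
move=> /subnK <-; elim: (K - N)%N => [|d IH] //= H.
by rewrite addSn stop_ge_Wn_step // IH.
Qed.

Lemma vopt_Wn_before M : Wn p M < (1 - p) ^+ M ->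
  forall N, (N <= M.+1)%N -> vopt N = Wn p N.
Proof.
move=> hM; elim=> [|N IH] hN; first by rewrite /Wn !expr0 subrr mul0rn.
have lt : Wn p N < (1 - p) ^+ N.
  rewrite ltNge; apply: contraL hM => stopN; rewrite -leNgt.
  exact: stop_ge_Wn_mono (ltnSE hN) stopN.
by rewrite voptS IH ?(ltnW hN) // max_l ?ltW // WnS.
Qed.

Lemma vopt_Wn_after M : (1 - p) ^+ M <= Wn p M -> vopt M = Wn p M ->
  forall d, vopt (M + d) = Wn p M.
Proof.
move=> hM vM; elim=> [|d IH]; first by rewrite addn0.
rewrite addnS voptS IH max_r; first by rewrite mulr2n; ring.
apply: le_trans hM; rewrite -(subnK (leq_addr d M)) exprD ler_piMl //.
  by rewrite exprn_ge0 // ltW // one_sub_p_gt0.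
by rewrite exprn_ile1 ?(ltW one_sub_p_gt0) // gerBl ltW.
Qed.

Lemma ratio_lt1E n (i : 'I_n) :
  (Wk p i / Vk p i < 1) = (Wn p (n - i.+1) < (1 - p) ^+ (n - i.+1)).
Proof. by rewrite /Wk /Vk ltr_pdivrMr ?mul1r // exprn_gt0 // one_sub_p_gt0. Qed.

End Optimality.

Theorem mainTheorem8 (R : realFieldType) (n : nat) (p : R)
  (hp0 : 0 < p) (hp1 : p <= 2^-1)
  (s : 'I_n)
  (hs : Wk p s / Vk p s < 1)
  (hsmin : forall k : 'I_n, (k < s)%N -> ~ (Wk p k / Vk p k < 1)) :
  forall tau : outcome n -> 'I_n, stopping_time tau ->
    Pr p (win tau) <= Pr p (win (thr_rule s)).
Proof.
move=> tau st; case: n s hs hsmin tau st => [|m] s; first by case: s.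
move=> hs hsmin tau st; apply: le_trans (Pr_win_le_vopt hp0 hp1 st) _.
rewrite Pr_win_thr; rewrite ratio_lt1E // in hs.
have s_lt : (s < m.+1)%N := ltn_ord s.
have before := vopt_Wn_before hp0 hp1 hs.
have [s0 | s_pos] := eqVneq (nat_of_ord s) 0%N.
  by rewrite s0 subn0 before //; lia.
(* index s-1 fails the criterion: there stopping is no better than Wn *)
have prev_lt : (s.-1 < m.+1)%N by lia.
have prev_lt_s : (Ordinal prev_lt < s)%N by rewrite /=; lia.
have prev_fails := hsmin _ prev_lt_s; rewrite ratio_lt1E // /= in prev_fails.
have stop_le : (1 - p) ^+ (m.+1 - s) <= Wn p (m.+1 - s).
  by rewrite leNgt; apply/negP; have <- : (m.+1 - s.-1.+1 = m.+1 - s)%N by lia.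
have vopt_at_s := before (m.+1 - s)%N ltac:(lia).
have := vopt_Wn_after hp0 hp1 stop_le vopt_at_s (m.+1 - (m.+1 - s)).
by rewrite subnKC ?leq_subr // => ->.
Qed.
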